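(* For every integer $n\ge1$, the set $\mathcal{GL}^n$ of $n\times n$ Gram-Lorentz matrices is convex if and only if $n\le 2$.
   Context: The $m$-dimensional Lorentz cone is $\mathcal{L}_m:=\{(c,x)\in\mathbb{R}\times\mathbb{R}^{m-1}: c\ge\|x\|\}$ (Euclidean norm). An $n\times n$ real symmetric matrix $X$ is Gram-Lorentz if there exist $m\ge1$ and vectors $\ell_1,\dots,\ell_n\in\mathcal{L}_m$ with $X_{ij}=\langle\ell_i,\ell_j\rangle$ for all $i,j$; $\mathcal{GL}^n$ denotes the set of such matrices. *)

From HB Require Import structures.
From mathcomp Require Import all_boot all_order all_algebra.
From mathcomp Require Import reals.
Set Implicit Arguments. Unset Strict Implicit. Unset Printing Implicit Defensive.
Import Order.TTheory GRing.Theory Num.Theory.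
Local Open Scope ring_scope.

(* Vectors of R^(m+1) = R x R^m, written (c, x) with c = v 0 ord0 and
   x_i = v 0 (lift ord0 i).  Indexing by m.+1 encodes the condition m >= 1
   of the paper (paper's m = our m.+1). *)
Definition lorentz_cone (R : realType) (m : nat) (v : 'rV[R]_m.+1) : Prop :=
  Num.sqrt (\sum_(i < m) (v 0 (lift ord0 i)) ^+ 2) <= v 0 ord0.

Definition rv_dot (R : realType) (m : nat) (u v : 'rV[R]_m.+1) : R :=
  \sum_(k < m.+1) u 0 k * v 0 k.

Definition gram_lorentz (R : realType) (n : nat) (X : 'M[R]_n) : Prop :=
  exists (m : nat) (l : 'I_n -> 'rV[R]_m.+1),
    (forall i, lorentz_cone (l i)) /\
    (forall i j, X i j = rv_dot (l i) (l j)).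

Definition convex_mxset (R : realType) (n : nat) (S : 'M[R]_n -> Prop) : Prop :=
  forall (X Y : 'M[R]_n) (t : R), S X -> S Y -> 0 <= t -> t <= 1 ->
    S ((1 - t) *: X + t *: Y).

(* A Gram-Lorentz matrix is always doubly nonnegative: it is positive
   semidefinite, and its entries are nonnegative because the Lorentz cone is
   self-dual (Cauchy-Schwarz).  Doubly nonnegative matrices form a convex set,
   and for n <= 2 every one of them is Gram-Lorentz, already with vectors of
   the two-dimensional cone.  For n >= 3 the matrix with leading block I_3 is a
   midpoint of two Gram-Lorentz matrices but is not Gram-Lorentz: a unit vector
   of the cone has squared first coordinate at least 1/2, whereas by Bessel's
   inequality the squared first coordinates of an orthonormal family sum to at
   most 1, so the cone contains at most two orthonormal vectors. *)
From HB Require Import structures.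
From mathcomp Require Import all_boot all_order all_algebra.
From mathcomp Require Import reals ring lra.
Import Order.TTheory GRing.Theory Num.Theory.
Local Open Scope ring_scope.
Set Implicit Arguments. Unset Strict Implicit. Unset Printing Implicit Defensive.

Section SumsOfSquares.
Context {R : realDomainType}.

Lemma sum_sqr_ge0 k (f : 'I_k -> R) : 0 <= \sum_i f i ^+ 2.
Proof. by apply: sumr_ge0 => i _; apply: sqr_ge0. Qed.

Lemma lagrange_identity k (f g : 'I_k -> R) :
  \sum_i \sum_j (f i * g j - f j * g i) ^+ 2 =
  2 * ((\sum_i f i ^+ 2) * (\sum_i g i ^+ 2) - (\sum_i f i * g i) ^+ 2).
Proof.
pose F i j := f i ^+ 2 * g j ^+ 2; pose G i j := f i * g i * (f j * g j).
have FGE : \sum_i \sum_j (f i * g j - f j * g i) ^+ 2 =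
    \sum_i \sum_j F i j + \sum_i \sum_j F j i - 2 * \sum_i \sum_j G i j.
  rewrite -big_split /= mulr_sumr -sumrB.
  apply: eq_bigr => i _; rewrite -big_split /= mulr_sumr -sumrB.
  by apply: eq_bigr => j _; rewrite /F /G; ring.
rewrite FGE [\sum_i \sum_j F j i]exchange_big /= /F /G expr2 !big_distrlr /=.
ring.
Qed.

Lemma cauchy_schwarz_sum k (f g : 'I_k -> R) :
  (\sum_i f i * g i) ^+ 2 <= (\sum_i f i ^+ 2) * (\sum_i g i ^+ 2).
Proof.
rewrite -subr_ge0 -(pmulr_rge0 _ (ltr0n R 2)) -lagrange_identity.
by apply: sumr_ge0 => i _; apply: sum_sqr_ge0.
Qed.
End SumsOfSquares.

Section LorentzCone.
Context {R : realType}.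
Implicit Types (m : nat) (c x : R).

Lemma lorentz_coneP m (v : 'rV[R]_m.+1) :
  lorentz_cone v <->
  0 <= v 0 ord0 /\ \sum_i v 0 (lift ord0 i) ^+ 2 <= v 0 ord0 ^+ 2.
Proof.
rewrite /lorentz_cone; set S := \sum_i _; set c := v 0 ord0.
have S0 : 0 <= S by apply: sum_sqr_ge0.
split=> [hSc | [c0 hSc]].
  have c0 : 0 <= c by apply: le_trans hSc; apply: sqrtr_ge0.
  by split=> //; rewrite -(sqr_sqrtr S0) ler_sqr // ?nnegrE ?sqrtr_ge0.
by rewrite -(ger0_norm c0) -sqrtr_sqr ler_sqrt // sqr_ge0.
Qed.

Lemma rv_dotC m (u v : 'rV[R]_m.+1) : rv_dot u v = rv_dot v u.
Proof. by apply: eq_bigr => k _; rewrite mulrC. Qed.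

Lemma rv_dot_head m (u v : 'rV[R]_m.+1) :
  rv_dot u v = u 0 ord0 * v 0 ord0 + \sum_i u 0 (lift ord0 i) * v 0 (lift ord0 i).
Proof. by rewrite /rv_dot big_ord_recl. Qed.

Lemma lorentz_dot_ge0 m (u v : 'rV[R]_m.+1) :
  lorentz_cone u -> lorentz_cone v -> 0 <= rv_dot u v.
Proof.
move=> /lorentz_coneP[u0 hu] /lorentz_coneP[v0 hv]; rewrite rv_dot_head.
have hcs := cauchy_schwarz_sum (fun i => u 0 (lift ord0 i)) (fun i => v 0 (lift ord0 i)).
have {}hcs := le_trans hcs (ler_pM (sum_sqr_ge0 _) (sum_sqr_ge0 _) hu hv).
have uv0 : 0 <= u 0 ord0 * v 0 ord0 by apply: mulr_ge0.
nra.
Qed.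

Lemma lorentz_unit_head_sqr m (v : 'rV[R]_m.+1) :
  lorentz_cone v -> rv_dot v v = 1 -> 1 <= 2 * v 0 ord0 ^+ 2.
Proof.
move=> /lorentz_coneP[_ hv]; rewrite rv_dot_head => hvv.
have sqrE : \sum_i v 0 (lift ord0 i) * v 0 (lift ord0 i) = \sum_i v 0 (lift ord0 i) ^+ 2.
  by apply: eq_bigr => i _; rewrite expr2.
rewrite sqrE -expr2 in hvv; lra.
Qed.

Definition vec2 c x : 'rV[R]_2 := \row_k if k == ord0 then c else x.

Lemma vec2_lorentz c x : `|x| <= c -> lorentz_cone (vec2 c x).
Proof.
move=> hxc; apply/lorentz_coneP; rewrite big_ord1 !mxE eqxx /= -real_normK ?num_real //.
split; first exact: le_trans hxc.
by rewrite ler_sqr ?nnegrE // (le_trans _ hxc).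
Qed.

Lemma rv_dot_vec2 c x d y : rv_dot (vec2 c x) (vec2 d y) = c * d + x * y.
Proof. by rewrite rv_dot_head big_ord1 !mxE. Qed.

End LorentzCone.

Section GramMatrices.
Context {R : realType}.

Lemma mulmx_trmx_diag_ge0 p k (A : 'M[R]_(p, k)) i : 0 <= (A *m A^T) i i.
Proof. by rewrite mxE; apply: sumr_ge0 => j _; rewrite mxE -expr2 sqr_ge0. Qed.

Lemma orthonormal_rows_col_le1 p k (L : 'M[R]_(p, k)) j :
  L *m L^T = 1%:M -> \sum_i L i j ^+ 2 <= 1.
Proof.
move=> LLt; pose Q := 1%:M - L^T *m L.
have QQt : Q *m Q^T = Q.
  rewrite /Q linearB /= trmx_mul trmxK trmx1 mulmxBl mulmxBr mulmx1 mul1mx.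
  by rewrite mulmxBr mulmx1 -!mulmxA (mulmxA L) LLt mul1mx subrr subr0.
have := mulmx_trmx_diag_ge0 Q j; rewrite QQt !mxE eqxx subr_ge0.
by under eq_bigr do rewrite mxE -expr2.
Qed.

Definition doubly_nonnegative n (X : 'M[R]_n) : Prop :=
  [/\ forall i j, X i j = X j i, forall i j, 0 <= X i j
    & forall x : 'rV_n, 0 <= (x *m X *m x^T) 0 0].

Lemma doubly_nonnegative_convex n : convex_mxset (@doubly_nonnegative n).
Proof.
move=> X Y t [Xs X0 Xpsd] [Ys Y0 Ypsd] t0 t1; have t1' : 0 <= 1 - t by lra.
split=> [i j | i j | x]; first by rewrite !mxE Xs Ys.
  by rewrite !mxE; apply: addr_ge0; apply: mulr_ge0.
rewrite mulmxDr mulmxDl -!scalemxAr -!scalemxAl mxE.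
by apply: addr_ge0; rewrite mxE; apply: mulr_ge0.
Qed.

Definition gram_mx n m (l : 'I_n -> 'rV[R]_m.+1) : 'M[R]_n :=
  \matrix_(i, j) rv_dot (l i) (l j).

Lemma gram_mxE n m (l : 'I_n -> 'rV[R]_m.+1) :
  gram_mx l = (\matrix_i l i) *m (\matrix_i l i)^T.
Proof. by apply/matrixP => i j; rewrite !mxE; apply: eq_bigr => k _; rewrite !mxE. Qed.

Lemma gram_lorentzP n (X : 'M[R]_n) :
  gram_lorentz X <->
  exists m (l : 'I_n -> 'rV[R]_m.+1), (forall i, lorentz_cone (l i)) /\ X = gram_mx l.
Proof.
split=> [[m [l [hl hX]]] | [m [l [hl ->]]]].
  by exists m, l; split=> //; apply/matrixP => i j; rewrite mxE.
by exists m, l; split=> // i j; rewrite mxE.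
Qed.

Lemma gram_lorentz_doubly_nonnegative n (X : 'M[R]_n) :
  gram_lorentz X -> doubly_nonnegative X.
Proof.
move=> /gram_lorentzP[m [l [hl ->]]].
split=> [i j | i j | x]; first by rewrite !mxE rv_dotC.
  by rewrite mxE lorentz_dot_ge0.
by rewrite gram_mxE mulmxA -mulmxA -trmx_mul mulmx_trmx_diag_ge0.
Qed.

Lemma gram_lorentz_convex_of_dnn n :
  (forall X : 'M[R]_n, doubly_nonnegative X -> gram_lorentz X) ->
  convex_mxset (@gram_lorentz R n).
Proof.
move=> dnn_gram X Y t /gram_lorentz_doubly_nonnegative hX
  /gram_lorentz_doubly_nonnegative hY t0 t1.
exact/dnn_gram/doubly_nonnegative_convex.
Qed.

End GramMatrices.

Section SmallOrders.
Context {R : realType}.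

Lemma ord2_cases (i : 'I_2) : i = 0 \/ i = 1.
Proof. by case: i => [[|[|//]] hi]; [left | right]; apply: val_inj. Qed.

Lemma quad_form_vec2 (X : 'M[R]_2) a b :
  (vec2 a b *m X *m (vec2 a b)^T) 0 0 =
  a ^+ 2 * X 0 0 + a * b * (X 0 1 + X 1 0) + b ^+ 2 * X 1 1.
Proof.
rewrite !(mxE, big_ord_recl, big_ord0) /=.
have -> : lift ord0 ord0 = 1 :> 'I_2 by apply: val_inj.
by ring.
Qed.

Lemma psd2_det_ge0 (p q r : R) :
  (forall a b, 0 <= a ^+ 2 * p + 2 * a * b * q + b ^+ 2 * r) -> q ^+ 2 <= p * r.
Proof.
move=> psd; have p0 : 0 <= p by have := psd 1 0; lra.
have r0 : 0 <= r by have := psd 0 1; lra.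
have [p_eq0|p_neq0] := eqVneq p 0.
  rewrite p_eq0 in psd *.
  have : 0 <= - (q ^+ 2 * (r + 2)) by have := psd (- (r + 1)) q; congr (0 <= _); ring.
  by rewrite mul0r oppr_ge0 pmulr_lle0 //; lra.
have pD : 0 <= p * (p * r - q ^+ 2) by have := psd q (- p); congr (0 <= _); ring.
by move: pD; rewrite pmulr_rge0 ?subr_ge0 // lt_def p_neq0.
Qed.

Lemma lorentz_gram2 (p q r : R) :
  0 <= p -> 0 <= q -> 0 <= r -> q ^+ 2 <= p * r ->
  exists u v : 'rV[R]_2, [/\ lorentz_cone u, lorentz_cone v,
    rv_dot u u = p, rv_dot u v = q & rv_dot v v = r].
Proof.
move=> p0 q0 r0 qpr; pose a := Num.sqrt (p / 2); pose b := q / (2 * a).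
have a0 : 0 <= a := sqrtr_ge0 _.
have aa : a ^+ 2 = p / 2 by rewrite sqr_sqrtr // divr_ge0.
have b0 : 0 <= b by rewrite divr_ge0 // mulr_ge0.
have [ab bb] : 2 * a * b = q /\ b ^+ 2 <= r / 2.
  have [p_eq0|p_neq0] := eqVneq p 0.
    have q_eq0 : q = 0 by rewrite p_eq0 mul0r in qpr; nra.
    by rewrite /b q_eq0 mul0r mulr0; split=> //; lra.
  have a_gt0 : 0 < a by rewrite sqrtr_gt0; lra.
  have ab : 2 * a * b = q by rewrite /b mulrC divfK // mulf_neq0 // gt_eqF.
  by split=> //; nra.
pose c := Num.sqrt (r / 2 - b ^+ 2).
have c0 : 0 <= c := sqrtr_ge0 _.
have cc : c ^+ 2 = r / 2 - b ^+ 2 by rewrite sqr_sqrtr // subr_ge0.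
(* In the basis (1, 1), (1, -1) of the cone this is a Cholesky factorization;
   when [p = 0], [b] is the junk value [q / 0 = 0]. *)
exists (vec2 a a), (vec2 (b + c) (b - c)); split; rewrite ?rv_dot_vec2.
- by apply: vec2_lorentz; rewrite ger0_norm.
- by apply: vec2_lorentz; rewrite ler_norml; apply/andP; split; lra.
- by rewrite -expr2; lra.
- lra.
- nra.
Qed.

Lemma doubly_nonnegative1_gram_lorentz (X : 'M[R]_1) :
  doubly_nonnegative X -> gram_lorentz X.
Proof.
move=> [_ X0 _]; exists 1%N, (fun=> vec2 (Num.sqrt (X 0 0)) 0); split.
  by move=> _; apply: vec2_lorentz; rewrite normr0 sqrtr_ge0.
by move=> i j; rewrite !ord1 rv_dot_vec2 mulr0 addr0 -expr2 sqr_sqrtr.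
Qed.

Lemma doubly_nonnegative2_gram_lorentz (X : 'M[R]_2) :
  doubly_nonnegative X -> gram_lorentz X.
Proof.
move=> [Xs X0 Xpsd].
have det : X 0 1 ^+ 2 <= X 0 0 * X 1 1.
  apply: psd2_det_ge0 => a b; have := Xpsd (vec2 a b).
  by rewrite quad_form_vec2 -Xs; congr (0 <= _); ring.
have [u [v [hu hv uu uv vv]]] := lorentz_gram2 (X0 0 0) (X0 0 1) (X0 1 1) det.
exists 1%N, (fun i => if i == 0 then u else v); split=> [i | i j].
  by case: (i == 0).
by case: (ord2_cases i) => ->; case: (ord2_cases j) => ->;
  rewrite /= ?uu ?vv ?uv // rv_dotC uv Xs.
Qed.

End SmallOrders.

Section OrderThree.
Context {R : realType}.

Lemma lorentz_orthonormal_le2 p m (l : 'I_p -> 'rV[R]_m.+1) :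
  (forall i, lorentz_cone (l i)) ->
  (forall i j, rv_dot (l i) (l j) = (i == j)%:R) -> (p <= 2)%N.
Proof.
move=> hl orth; pose L := \matrix_i l i.
have LLt : L *m L^T = 1%:M by rewrite -gram_mxE; apply/matrixP => i j; rewrite !mxE orth.
have := orthonormal_rows_col_le1 ord0 LLt.
have head i : 2^-1 <= L i ord0 ^+ 2.
  by rewrite mxE; have := orth i i; rewrite eqxx => /(lorentz_unit_head_sqr (hl i)); lra.
move=> /(le_trans (ler_sum _ (fun i _ => head i))).
by rewrite sumr_const card_ord -mulr_natl -(ler_nat R) => ?; lra.
Qed.

Lemma gram_lorentz_not_convex n : ~ convex_mxset (@gram_lorentz R n.+3).
Proof.
move=> convex.
pose delta k (i : 'I_n.+3) : R := (i == k :> nat)%:R.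
pose lX i := vec2 (delta 0 i + delta 1 i) (delta 0 i - delta 1 i).
pose lY i := vec2 (delta 2 i) (delta 2 i).
have delta_ge0 k i : 0 <= delta k i := ler0n _ _.
(* The midpoint of [gram_mx lX] and [gram_mx lY] has the 3 x 3 identity as
   leading block. *)
have glX : gram_lorentz (gram_mx lX).
  apply/gram_lorentzP; exists 1%N, lX; split=> // i; apply: vec2_lorentz.
  by have := delta_ge0 0 i; have := delta_ge0 1 i; rewrite ler_norml => ? ?; apply/andP; split; lra.
have glY : gram_lorentz (gram_mx lY).
  by apply/gram_lorentzP; exists 1%N, lY; split=> // i; apply: vec2_lorentz; rewrite ger0_norm.
have half0 : (0 : R) <= 2^-1 by rewrite invr_ge0.
have half1 : (2^-1 : R) <= 1 by rewrite invf_le1 ?ler1n.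
have /gram_lorentzP[m [l [hl lE]]] := convex _ _ _ glX glY half0 half1.
pose w := widen_ord (isT : (3 <= n.+3)%N).
suff : (3 <= 2)%N by [].
apply: (@lorentz_orthonormal_le2 _ _ (l \o w)) => [i | i j]; first exact: hl.
move: lE => /matrixP/(_ (w i) (w j)).
rewrite /gram_mx !mxE /= => <-.
rewrite !rv_dot_vec2 /delta.
by case: i j => [[|[|[|//]]] ?] [[|[|[|//]]] ?] /=; lra.
Qed.

End OrderThree.

Theorem lemma4p6 (R : realType) (n : nat) (hn : (1 <= n)%N) :
  convex_mxset (@gram_lorentz R n) <-> (n <= 2)%N.
Proof.
case: n hn => [|[|[|n]]] // _.
- by split=> // _; apply/gram_lorentz_convex_of_dnn/doubly_nonnegative1_gram_lorentz.
- by split=> // _; apply/gram_lorentz_convex_of_dnn/doubly_nonnegative2_gram_lorentz.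
- by split=> // /gram_lorentz_not_convex.
Qed.
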